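(* Let $M$ be a multiplicity free object of a nonzero finite abelian category $\mathcal C$ over $\mathbb F$, and $\sigma\in\mathrm{JH}(M)$. If $d^M_{\mathrm{rad}}(\sigma)>0$, there is $\sigma'\in\mathrm{JH}(M)$ with $d^M_{\mathrm{rad}}(\sigma')=d^M_{\mathrm{rad}}(\sigma)-1$ such that $\sigma'$ $\mathrm{rad}$-points to $\sigma$. Likewise, if $d_M^{\mathrm{soc}}(\sigma)>0$, there is $\sigma'\in\mathrm{JH}(M)$ with $d_M^{\mathrm{soc}}(\sigma')=d_M^{\mathrm{soc}}(\sigma)-1$ such that $\sigma$ $\mathrm{soc}$-points to $\sigma'$.
   Context: $\mathcal C$ is an $\mathbb F$-linear abelian category all of whose objects have finite length. Radical filtration: $\mathrm{rad}^0M=M$, $\mathrm{rad}^nM=\mathrm{rad}(\mathrm{rad}^{n-1}M)$ ($\mathrm{rad}$ = smallest subobject with semisimple quotient); socle filtration: $\mathrm{soc}_{-1}M=0$, $\mathrm{soc}_nM$ = preimage in $M$ of $\mathrm{soc}(M/\mathrm{soc}_{n-1}M)$. For $M$ multiplicity free (each Jordan–Hölder factor occurring once) and $\sigma\in\mathrm{JH}(M)$, $d^M_{\mathrm{rad}}(\sigma)$ is the unique $n$ with $\sigma$ a constituent of $\mathrm{rad}^nM/\mathrm{rad}^{n+1}M$, and $d_M^{\mathrm{soc}}(\sigma)$ the unique $n$ with $\sigma$ a constituent of $\mathrm{soc}_nM/\mathrm{soc}_{n-1}M$. $\sigma$ points to $\sigma'$ if the subquotient of $M$ which is an extension $0\to\sigma'\to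 X\to\sigma\to0$ is nonsplit. Given a filtration $\mathscr F$ (here radical or socle), $\sigma$ $\mathscr F$-points to $\sigma'$ if $\sigma$ points to $\sigma'$ and the filtration induced by $\mathscr F$ on that subquotient $X$ has exactly two nonzero graded pieces. *)

(* Model: by the standard equivalence (a finite abelian F-linear category is
   equivalent to A-mod for a finite-dimensional F-algebra A), the object M is
   F^n (row vectors 'rV[F]_n) with A acting through a finite family of
   generating operators g i : 'M[F]_n.  Subobjects of M are row spaces of square matrices
   (stable under all g i).  A subquotient is a pair (W, U) with W <= U. *)
From HB Require Import structures.
From mathcomp Require Import all_boot all_order all_algebra.
Set Implicit Arguments. Unset Strict Implicit. Unset Printing Implicit Defensive.
Import GRing.Theory.
Local Open Scope ring_scope.

Section Modules.
Variables (F : fieldType) (n : nat) (I : finType) (g : I -> 'M[F]_n).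

Definition stable (U : 'M[F]_n) : Prop := forall i, (U *m g i <= U)%MS.

Definition subq (W U : 'M[F]_n) : Prop := [/\ stable W, stable U & (W <= U)%MS].

Definition simple_sq (W U : 'M[F]_n) : Prop :=
  [/\ subq W U, (\rank W < \rank U)%N &
      forall V, stable V -> (W <= V)%MS -> (V <= U)%MS ->
                (V == W)%MS \/ (V == U)%MS].

(* U1/W1 and U2/W2 are isomorphic: f induces an A-linear bijection *)
Definition iso_sq (W1 U1 W2 U2 : 'M[F]_n) : Prop :=
  exists f : 'M[F]_n,
    [/\ (U1 *m f <= U2)%MS, (W1 *m f <= W2)%MS,
        forall i, (U1 *m (g i *m f - f *m g i) <= W2)%MS,
        forall v : 'rV[F]_n, (v <= U1)%MS -> (v *m f <= W2)%MS -> (v <= W1)%MS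
      & (U2 <= U1 *m f + W2)%MS].

Definition semisimple_sq (W U : 'M[F]_n) : Prop :=
  forall V, stable V -> (W <= V)%MS -> (V <= U)%MS ->
    exists V', [/\ stable V', (W <= V')%MS, (V' <= U)%MS,
                   (V + V' == U)%MS & (V :&: V' == W)%MS].

Definition is_rad (U R : 'M[F]_n) : Prop :=
  [/\ subq R U, semisimple_sq R U &
      forall V, stable V -> (V <= U)%MS -> semisimple_sq V U -> (R <= V)%MS].

Definition is_soc_over (B S : 'M[F]_n) : Prop :=
  [/\ subq B S, semisimple_sq B S &
      forall V, stable V -> (B <= V)%MS -> semisimple_sq B V -> (V <= S)%MS].

Definition radfilt (Rf : nat -> 'M[F]_n) : Prop :=
  (Rf 0%N == 1%:M)%MS /\ forall k, is_rad (Rf k) (Rf k.+1).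

(* Sf k.+1 = soc_k M, Sf 0 = soc_{-1} M = 0 *)
Definition socfilt (Sf : nat -> 'M[F]_n) : Prop :=
  (Sf 0%N == (0 : 'M[F]_n))%MS /\ forall k, is_soc_over (Sf k) (Sf k.+1).

Definition compseries (k : nat) (s : nat -> 'M[F]_n) : Prop :=
  [/\ (s 0%N == (0 : 'M[F]_n))%MS, (s k == 1%:M)%MS &
      forall i, (i < k)%N -> simple_sq (s i) (s i.+1)].

Definition multfree : Prop :=
  forall k s, compseries k s -> forall i j, (i < j)%N -> (j < k)%N ->
    ~ iso_sq (s i) (s i.+1) (s j) (s j.+1).

Definition drad (Rf : nat -> 'M[F]_n) (W U : 'M[F]_n) (d : nat) : Prop :=
  exists W0 U0, [/\ simple_sq W0 U0, (Rf d.+1 <= W0)%MS, (U0 <= Rf d)%MS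
                  & iso_sq W0 U0 W U].

(* the simple sigma = U/W is a constituent of soc_d M / soc_{d-1} M *)
Definition dsoc (Sf : nat -> 'M[F]_n) (W U : 'M[F]_n) (d : nat) : Prop :=
  exists W0 U0, [/\ simple_sq W0 U0, (Sf d <= W0)%MS, (U0 <= Sf d.+1)%MS
                  & iso_sq W0 U0 W U].

Definition piece_nz (Ff : nat -> 'M[F]_n) (W U : 'M[F]_n) (k : nat) : bool :=
  \rank ((Ff k :&: U) + W)%MS != \rank ((Ff k.+1 :&: U) + W)%MS.

(* sigma = Uq/Wq Ff-points to sigma' = Us/Ws : there is a nonsplit subquotient
   0 -> sigma' -> U/W -> sigma -> 0 of M whose induced Ff-filtration has
   exactly two nonzero graded pieces *)
Definition fpoints (Ff : nat -> 'M[F]_n) (Wq Uq Ws Us : 'M[F]_n) : Prop :=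
  exists W X U,
    [/\ subq W X /\ subq X U, iso_sq W X Ws Us, iso_sq X U Wq Uq,
        (~ exists Y, [/\ subq W Y, (Y <= U)%MS, (X + Y == U)%MS
                                   & (X :&: Y == W)%MS])
      & exists k1 k2, k1 <> k2 /\
          forall k, piece_nz Ff W U k <-> (k = k1 \/ k = k2)].

End Modules.

(* Let sigma be a constituent of rad^(d+1) M / rad^(d+2) M and put R = rad^(d+1) M.
   As this layer is semisimple, R has a maximal submodule C with R/C ~ sigma.
   Suppose every simple A/R inside rad^d M / R extended R/C split over C.  Growing
   a partial complement of R/C in rad^d M / C one simple summand at a time then
   yields a full complement Y; but rad^d M / Y ~ R/C is simple, so R <= Y by
   minimality of the radical, which is absurd.  Hence some A/C is a nonsplit
   extension, and its induced radical filtration has exactly the two pieces A/R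
   and R/C.  The socle statement is dual: supplements of soc_d M in a simple
   extension of it shrink instead of complements growing. *)
From Pilot Require Import Defs.
From mathcomp Require Import all_boot all_order all_algebra.
From mathcomp Require Import zify.
From Stdlib Require Import Classical.
Set Implicit Arguments. Unset Strict Implicit. Unset Printing Implicit Defensive.
Import GRing.Theory.
Local Open Scope ring_scope.

Lemma ex_minimal (T : Type) (P : T -> Prop) (m : T -> nat) x :
  P x -> exists2 y, P y & forall z, P z -> (m y <= m z)%N.
Proof.
have [k] := ubnP (m x); elim: k x => // k IH x lt_xk Px.
have [[z Pz lt_zx]|min_x] := classic (exists2 z, P z & (m z < m x)%N).
  exact: IH z (leq_trans lt_zx lt_xk) Pz.
by exists x => // z Pz; rewrite leqNgt; apply/negP => lt_zx; apply: min_x; exists z.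
Qed.

Lemma ex_maximal (T : Type) (P : T -> Prop) (m : T -> nat) b x :
  (forall y, P y -> (m y <= b)%N) ->
  P x -> exists2 y, P y & forall z, P z -> (m z <= m y)%N.
Proof.
move=> le_mb Px; have [y Py min_y] := ex_minimal (fun y => b - m y)%N Px.
by exists y => // z Pz; have := min_y z Pz; have := le_mb y Py; have := le_mb z Pz; lia.
Qed.

Lemma jumps_three_levels (r : nat -> nat) d a b c :
  a != b -> b != c ->
  (forall k, (k <= d)%N -> r k = a) -> r d.+1 = b ->
  (forall k, (d.+2 <= k)%N -> r k = c) ->
  forall k, r k != r k.+1 <-> k = d \/ k = d.+1.
Proof.
move=> ab bc r_lo r_mid r_hi k.
have [lt_kd|lt_dk|->] := ltngtP k d.
- rewrite r_lo ?(ltnW lt_kd) // r_lo // eqxx.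
  by split=> // -[]; lia.
- have [|lt_d1k|->] := ltngtP k d.+1; first lia.
    rewrite r_hi // r_hi ?(ltnW lt_d1k) // eqxx.
    by split=> // -[]; lia.
  by rewrite r_mid r_hi //; split=> _; [right|].
- by rewrite r_lo // r_mid; split=> _; [left|].
Qed.

Section Modules.
Variables (F : fieldType) (n : nat) (I : finType) (g : I -> 'M[F]_n).
Implicit Types (A B C K R S T U V W X Y Z : 'M[F]_n).

Lemma ltn_mxrankE A B : (A <= B)%MS -> (\rank A < \rank B)%N = ~~ (B <= A)%MS.
Proof. by move=> sAB; rewrite (ltn_leqif (mxrank_leqif_sup sAB)). Qed.

Lemma stable_capmx A B : stable g A -> stable g B -> stable g (A :&: B)%MS.
Proof.
move=> sA sB i; rewrite sub_capmx.
by rewrite (submx_trans (submxMr _ (capmxSl _ _)) (sA i))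
           (submx_trans (submxMr _ (capmxSr _ _)) (sB i)).
Qed.

Lemma stable_addsmx A B : stable g A -> stable g B -> stable g (A + B)%MS.
Proof.
move=> sA sB i; rewrite addsmxMr addsmx_sub.
by rewrite (submx_trans (sA i) (addsmxSl _ _)) (submx_trans (sB i) (addsmxSr _ _)).
Qed.

Lemma iso_sq_trans W1 U1 W2 U2 W3 U3 :
  iso_sq g W1 U1 W2 U2 -> iso_sq g W2 U2 W3 U3 -> iso_sq g W1 U1 W3 U3.
Proof.
move=> [f1 [fU1 fW1 fg1 inj1 surj1]] [f2 [fU2 fW2 fg2 inj2 surj2]].
exists (f1 *m f2); split.
- by rewrite mulmxA (submx_trans (submxMr _ fU1) fU2).
- by rewrite mulmxA (submx_trans (submxMr _ fW1) fW2).
- move=> i.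
  have -> : U1 *m (g i *m (f1 *m f2) - f1 *m f2 *m g i) =
    U1 *m (g i *m f1 - f1 *m g i) *m f2 + U1 *m f1 *m (g i *m f2 - f2 *m g i).
    by rewrite !mulmxBr !mulmxBl !mulmxA addrA subrK.
  apply: addmx_sub; first exact: submx_trans (submxMr _ (fg1 i)) fW2.
  exact: submx_trans (submxMr _ fU1) (fg2 i).
- move=> v vU1 vf; apply: inj1 => //; apply: inj2; last by rewrite -mulmxA.
  exact: submx_trans (submxMr _ vU1) fU1.
- apply: submx_trans surj2 _; rewrite addsmx_sub addsmxSr andbT.
  apply: submx_trans (submxMr f2 surj1) _; rewrite addsmxMr addsmx_sub.
  by rewrite -mulmxA addsmxSl /= (submx_trans fW2 (addsmxSr _ _)).
Qed.

(* The second isomorphism theorem: the inclusion maps U1/W1 isomorphically onto U2/W2. *)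
Definition incl_iso W1 U1 W2 U2 : Prop :=
  [/\ (W1 <= W2)%MS, (U1 <= U2)%MS, (U1 :&: W2 <= W1)%MS & (U2 <= U1 + W2)%MS].

Lemma incl_iso_sq W1 U1 W2 U2 : incl_iso W1 U1 W2 U2 -> iso_sq g W1 U1 W2 U2.
Proof.
move=> [W12 U12 UW surj]; exists 1%:M; rewrite !mulmx1; split=> //.
  by move=> i; rewrite mulmx1 mul1mx subrr mulmx0 sub0mx.
by move=> v vU; rewrite mulmx1 => vW; apply: submx_trans UW; rewrite sub_capmx vU.
Qed.

Lemma iso_sq_refl W U : iso_sq g W U W U.
Proof. by apply: incl_iso_sq; split; rewrite ?capmxSr ?addsmxSl. Qed.

(* The inverse isomorphism is the projection onto U1 along a complement D of
   U1 :&: W2 in W2. *)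
Lemma incl_iso_sq_inv W1 U1 W2 U2 :
  Defs.subq g W1 U1 -> Defs.subq g W2 U2 -> incl_iso W1 U1 W2 U2 ->
  iso_sq g W2 U2 W1 U1.
Proof.
move=> [sW1 sU1 _] [sW2 _ W2U2] [W12 U12 UW surj].
set D := (W2 :\: U1)%MS.
have DW2 : (D <= W2)%MS by exact: diffmxSl.
have W2D : (W2 <= D + W2 :&: U1)%MS by rewrite (addsmx_diff_cap_eq W2 U1).
have U2UD : (U2 <= U1 + D)%MS.
  apply: submx_trans surj _; rewrite addsmx_sub addsmxSl /=.
  apply: submx_trans W2D _; rewrite addsmx_sub addsmxSr /=.
  exact: submx_trans (capmxSr _ _) (addsmxSl _ _).
pose f := proj_mx U1 D.
have fU2 : (U2 *m f <= U1)%MS by apply: proj_mx_sub.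
have f_id m (A : 'M_(m, n)) : (A <= U1)%MS -> A *m f = A.
  by apply: proj_mx_id; rewrite capmxC capmx_diff.
have f_0 m (A : 'M_(m, n)) : (A <= D)%MS -> A *m f = 0.
  by apply: proj_mx_0; rewrite capmxC capmx_diff.
have f_compl (v : 'rV_n) : (v <= U1 + D)%MS -> (v - v *m f <= D)%MS.
  exact: proj_mx_compl_sub.
clearbody f.
have fW2 : (W2 *m f <= W1)%MS.
  apply: submx_trans (submxMr _ W2D) _; rewrite addsmxMr addsmx_sub f_0 // sub0mx.
  by rewrite f_id ?capmxSr // capmxC.
exists f; split=> //.
- move=> i; apply: submx_trans (submxMr _ surj) _; rewrite addsmxMr addsmx_sub.
  rewrite !mulmxBr !mulmxA [U1 *m g i *m f]f_id ?sU1 // [U1 *m f]f_id //.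
  rewrite subrr sub0mx addmx_sub ?eqmx_opp ?(submx_trans (submxMr _ (sW2 i)) fW2) //.
  exact: submx_trans (submxMr (g i) fW2) (sW1 i).
- move=> v vU2 vW1; rewrite -(subrK (v *m f) v) addmx_sub //.
    exact: submx_trans (f_compl v (submx_trans vU2 U2UD)) DW2.
  exact: submx_trans vW1 W12.
- by rewrite -{1}(f_id _ U1) // addsmxC (submx_trans _ (addsmxSr _ _)) // submxMr.
Qed.

Lemma simple_sq_no_between W U :
  Defs.subq g W U -> (\rank W < \rank U)%N ->
  (forall V, stable g V -> (W <= V)%MS -> (V <= U)%MS ->
     ~~ (\rank W < \rank V < \rank U)%N) ->
  simple_sq g W U.
Proof.
move=> sWU ltWU between; split=> // V sV WV VU.
have [le_VW|lt_WV] := leqP (\rank V) (\rank W).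
  by left; rewrite -(geq_leqif (mxrank_leqif_sup WV)) le_VW WV.
right; rewrite VU -(geq_leqif (mxrank_leqif_sup VU)) leqNgt.
by apply: contra (between V sV WV VU) => lt_VU; rewrite lt_WV.
Qed.

Lemma simple_semisimple W U : simple_sq g W U -> semisimple_sq g W U.
Proof.
move=> [[sW sU WU] _ simWU] V sV WV VU.
have [/andP[VW _]|/andP[_ UV]] := simWU V sV WV VU.
- exists U; split=> //; first by rewrite addsmx_sub VU submx_refl addsmxSr.
  by rewrite sub_capmx WV WU andbT (submx_trans (capmxSl _ _) VW).
- exists W; split=> //.
    by rewrite addsmx_sub VU WU (submx_trans UV (addsmxSl _ _)).
  by rewrite capmxSr sub_capmx WV submx_refl.
Qed.

Lemma simple_sq_incl W1 U1 W2 U2 :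
  Defs.subq g W2 U2 -> incl_iso W1 U1 W2 U2 -> simple_sq g W1 U1 -> simple_sq g W2 U2.
Proof.
move=> [sW2 sU2 W2U2] [W12 U12 UW surj] [[sW1 sU1 W1U1] ltWU1 simWU1].
split=> //.
  rewrite ltn_mxrankE //; apply: contraL ltWU1 => U2W2.
  rewrite ltn_mxrankE // negbK; apply: submx_trans UW.
  by rewrite sub_capmx submx_refl (submx_trans U12 U2W2).
move=> V sV W2V VU2.
have [||/andP[VU1 _]|/andP[_ U1V]] := simWU1 _ (stable_capmx sV sU1).
- by rewrite sub_capmx W1U1 (submx_trans W12 W2V).
- exact: capmxSr.
- left; rewrite W2V andbT.
  have : (V <= (W2 + U1) :&: V)%MS.
    by rewrite sub_capmx submx_refl andbT addsmxC (submx_trans VU2 surj).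
  rewrite -matrix_modl // => /submx_trans; apply.
  by rewrite addsmx_sub submx_refl capmxC (submx_trans VU1 W12).
- right; rewrite VU2 /=; apply: submx_trans surj _.
  by rewrite addsmx_sub W2V (submx_trans U1V (capmxSl _ _)).
Qed.

Lemma simple_sq_incl_inv W1 U1 W2 U2 :
  Defs.subq g W1 U1 -> incl_iso W1 U1 W2 U2 -> simple_sq g W2 U2 -> simple_sq g W1 U1.
Proof.
move=> [sW1 sU1 W1U1] [W12 U12 UW surj] [[sW2 sU2 W2U2] ltWU2 simWU2].
split=> //.
  rewrite ltn_mxrankE //; apply: contraL ltWU2 => U1W1.
  rewrite ltn_mxrankE // negbK; apply: submx_trans surj _.
  by rewrite addsmx_sub submx_refl (submx_trans U1W1 W12).
move=> V sV W1V VU1.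
have [||/andP[VU2 _]|/andP[_ U2V]] := simWU2 _ (stable_addsmx sV sW2).
- exact: addsmxSr.
- by rewrite addsmx_sub W2U2 (submx_trans VU1 U12).
- left; rewrite W1V andbT; apply: submx_trans UW.
  by rewrite sub_capmx VU1 (submx_trans (addsmxSl _ _) VU2).
- right; rewrite VU1 /=.
  have : (U1 <= (V + W2) :&: U1)%MS by rewrite sub_capmx submx_refl (submx_trans U12 U2V).
  rewrite -matrix_modl // => /submx_trans; apply.
  by rewrite addsmx_sub submx_refl capmxC (submx_trans UW W1V).
Qed.

Lemma ex_simple_above R Z :
  stable g R -> stable g Z -> (R <= Z)%MS -> (\rank R < \rank Z)%N ->
  exists2 A, (A <= Z)%MS & simple_sq g R A.
Proof.
move=> sR sZ RZ ltRZ.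
pose P A := [/\ stable g A, (R <= A)%MS, (A <= Z)%MS & (\rank R < \rank A)%N].
have PZ : P Z by split.
have [A [sA RA AZ ltRA] min_A] := ex_minimal (fun A => \rank A) PZ.
exists A => //; apply: simple_sq_no_between => // V sV RV VA.
apply/andP=> -[ltRV ltVA].
by have := min_A V (And4 sV RV (submx_trans VA AZ) ltRV); rewrite leqNgt ltVA.
Qed.

Lemma ex_simple_below K S :
  stable g K -> stable g S -> (K <= S)%MS -> (\rank K < \rank S)%N ->
  exists2 B, (K <= B)%MS & simple_sq g B S.
Proof.
move=> sK sS KS ltKS.
pose P B := [/\ stable g B, (K <= B)%MS, (B <= S)%MS & (\rank B < \rank S)%N].
have PK : P K by split.
have [B [sB KB BS ltBS] max_B] :=
  ex_maximal (m := fun B => \rank B) (fun B _ => rank_leq_col B) PK.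
exists B => //; apply: simple_sq_no_between => // V sV BV VS.
apply/andP=> -[ltBV ltVS].
by have := max_B V (And4 sV (submx_trans KB BV) VS ltVS); rewrite leqNgt ltBV.
Qed.

Lemma semisimple_simple_quotient B X W0 U0 :
  stable g X -> semisimple_sq g B X -> simple_sq g W0 U0 ->
  (B <= W0)%MS -> (U0 <= X)%MS ->
  exists C, [/\ (B <= C)%MS, simple_sq g C X & iso_sq g C X W0 U0].
Proof.
move=> sX ssBX simWU BW0 U0X; have [[sW0 sU0 W0U0] _ _] := simWU.
have [V [sV BV VX /andP[_ sumV] /andP[capV _]]] :=
  ssBX U0 sU0 (submx_trans BW0 W0U0) U0X.
have incl : incl_iso W0 U0 (W0 + V)%MS X.
  split=> //; first exact: addsmxSl.
    rewrite capmxC -matrix_modl // addsmx_sub submx_refl /=.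
    by rewrite capmxC (submx_trans capV BW0).
  by apply: submx_trans sumV _; rewrite addsmxS ?addsmxSr.
have subCX : Defs.subq g (W0 + V)%MS X.
  by split; [exact: stable_addsmx | | rewrite addsmx_sub VX (submx_trans W0U0 U0X)].
exists (W0 + V)%MS; split.
- exact: submx_trans BV (addsmxSr _ _).
- exact: simple_sq_incl subCX incl simWU.
- exact: incl_iso_sq_inv (And3 sW0 sU0 W0U0) subCX incl.
Qed.

Lemma semisimple_simple_sub B X W0 U0 :
  stable g B -> semisimple_sq g B X -> simple_sq g W0 U0 ->
  (B <= W0)%MS -> (U0 <= X)%MS ->
  exists T, [/\ (T <= U0)%MS, simple_sq g B T & iso_sq g B T W0 U0].
Proof.
move=> sB ssBX simWU BW0 U0X; have [[sW0 sU0 W0U0] _ _] := simWU.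
have [V [sV BV _ /andP[_ sumV] /andP[capV _]]] :=
  ssBX W0 sW0 BW0 (submx_trans W0U0 U0X).
have incl : incl_iso B (V :&: U0)%MS W0 U0.
  split=> //; first exact: capmxSr.
    apply: submx_trans capV.
    by rewrite sub_capmx capmxSr (submx_trans (capmxSl _ _) (capmxSl _ _)).
  have : (U0 <= (W0 + V) :&: U0)%MS by rewrite sub_capmx submx_refl (submx_trans U0X sumV).
  by rewrite -matrix_modl // addsmxC.
have subBT : Defs.subq g B (V :&: U0)%MS.
  by split; [| exact: stable_capmx | rewrite sub_capmx BV (submx_trans BW0 W0U0)].
exists (V :&: U0)%MS; split.
- exact: capmxSr.
- exact: simple_sq_incl_inv subBT incl simWU.
- exact: incl_iso_sq incl.
Qed.

Definition splits W X U : Prop :=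
  exists Y, [/\ Defs.subq g W Y, (Y <= U)%MS, (X + Y == U)%MS & (X :&: Y == W)%MS].

Section Radical.
Variables X R C : 'M[F]_n.
Hypotheses (radXR : is_rad g X R) (simCR : simple_sq g C R).

Definition partial_compl Y :=
  [/\ stable g Y, (C <= Y)%MS, (Y <= X)%MS & (Y :&: R <= C)%MS].

Lemma partial_compl_proper Y : partial_compl Y -> ~~ (X <= Y + R)%MS.
Proof.
move=> [sY CY YX YRC]; apply/negP => XYR.
have [[_ sX RX] _ minR] := radXR; have [[_ _ CR] ltCR _] := simCR.
have simYX : simple_sq g Y X.
  apply: simple_sq_incl simCR => //.
  by split=> //; [rewrite capmxC | rewrite addsmxC].
have RY := minR Y sY YX (simple_semisimple simYX).
move: ltCR; rewrite ltn_mxrankE // => /negP; apply; apply: submx_trans YRC.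
by rewrite sub_capmx RY submx_refl.
Qed.

Lemma partial_compl_grow Y :
  partial_compl Y -> (forall A, simple_sq g R A -> (A <= X)%MS -> splits C R A) ->
  exists2 Y', partial_compl Y' & (\rank Y < \rank Y')%N.
Proof.
move=> PY all_split; have [sY CY YX YRC] := PY.
have [[sR _ RX] ssRX _] := radXR.
have YRX : (Y + R <= X)%MS by rewrite addsmx_sub YX RX.
have [Z [sZ RZ ZX /andP[_ sumZ] /andP[capZ _]]] :=
  ssRX _ (stable_addsmx sY sR) (addsmxSr _ _) YRX.
have ltRZ : (\rank R < \rank Z)%N.
  rewrite ltn_mxrankE //; apply: contra (partial_compl_proper PY) => ZR.
  apply: submx_trans sumZ _.
  by rewrite addsmx_sub submx_refl (submx_trans ZR (addsmxSr _ _)).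
have [A AZ simA] := ex_simple_above sR sZ RZ ltRZ; have [[_ _ RA] ltRA _] := simA.
have [Y1 [[_ sY1 CY1] Y1A /andP[_ sumY1] /andP[capY1 _]]] :=
  all_split A simA (submx_trans AZ ZX).
have Y1YR : (Y1 :&: (Y + R) <= C)%MS.
  apply: submx_trans capY1; rewrite sub_capmx capmxSl andbT.
  by apply: submx_trans capZ; rewrite capmxC capmxS // (submx_trans Y1A AZ).
exists (Y + Y1)%MS; first split.
- exact: stable_addsmx.
- exact: submx_trans CY (addsmxSl _ _).
- by rewrite addsmx_sub YX (submx_trans Y1A (submx_trans AZ ZX)).
- apply: submx_trans YRC; rewrite sub_capmx capmxSr andbT.
  apply: submx_trans (capmxS (submx_refl _) (addsmxSr Y R)) _.
  by rewrite -matrix_modl ?addsmxSl // addsmx_sub submx_refl (submx_trans Y1YR CY).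
rewrite ltn_mxrankE ?addsmxSl //; apply: contraL ltRA => Y1Y.
rewrite ltn_mxrankE // negbK; apply: submx_trans capZ; rewrite sub_capmx AZ andbT.
apply: submx_trans sumY1 _; rewrite addsmx_sub addsmxSr.
by rewrite (submx_trans (submx_trans (addsmxSr Y Y1) Y1Y) (addsmxSl _ _)).
Qed.

Lemma rad_nonsplit : exists A, [/\ simple_sq g R A, (A <= X)%MS & ~ splits C R A].
Proof.
apply: NNPP => no_nonsplit.
have all_split A : simple_sq g R A -> (A <= X)%MS -> splits C R A.
  by move=> simA AX; apply: NNPP => nsplit; apply: no_nonsplit; exists A.
have [[[sC _ CR] _ _] [[_ _ RX] _ _]] := (simCR, radXR).
have PC : partial_compl C by split; rewrite ?capmxSl ?(submx_trans CR RX).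
have [Y PY maxY] := ex_maximal (m := fun Y => \rank Y) (fun Y _ => rank_leq_col Y) PC.
have [Y' PY' ltYY'] := partial_compl_grow PY all_split.
by have := maxY Y' PY'; rewrite leqNgt ltYY'.
Qed.

End Radical.

Section Socle.
Variables B S U : 'M[F]_n.
Hypotheses (socBS : is_soc_over g B S) (simSU : simple_sq g S U).

Definition supplement T :=
  [/\ stable g T, (B <= T)%MS, (T <= U)%MS & (U <= T + S)%MS].

Lemma supplement_proper T : supplement T -> ~~ (T :&: S <= B)%MS.
Proof.
move=> [sT BT TU UTS]; apply/negP => TSB.
have [[sB _ BS] _ maxS] := socBS; have [[_ _ SU] ltSU _] := simSU.
have simBT : simple_sq g B T by apply: simple_sq_incl_inv simSU; split.
have TS := maxS T sT BT (simple_semisimple simBT).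
move: ltSU; rewrite ltn_mxrankE // => /negP; apply; apply: submx_trans UTS _.
by rewrite addsmx_sub TS submx_refl.
Qed.

Lemma supplement_shrink T :
  supplement T -> (forall K, simple_sq g K S -> (B <= K)%MS -> splits K S U) ->
  exists2 T', supplement T' & (\rank T' < \rank T)%N.
Proof.
move=> PT all_split; have [sT BT TU UTS] := PT.
have [[_ sS BS] ssBS _] := socBS.
have BTS : (B <= T :&: S)%MS by rewrite sub_capmx BT BS.
have [K [sK BK KS /andP[_ sumK] /andP[capK _]]] :=
  ssBS _ (stable_capmx sT sS) BTS (capmxSr _ _).
have ltKS : (\rank K < \rank S)%N.
  rewrite ltn_mxrankE //; apply: contra (supplement_proper PT) => SK.
  by apply: submx_trans capK; rewrite sub_capmx submx_refl (submx_trans (capmxSr _ _) SK).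
have [K1 KK1 simK1] := ex_simple_below sK sS KS ltKS; have [[_ _ K1S] ltK1S _] := simK1.
have [Y [[_ sY K1Y] YU /andP[_ sumY] /andP[capY _]]] :=
  all_split K1 simK1 (submx_trans BK KK1).
have TTSY : (T <= T :&: S + Y)%MS.
  apply: submx_trans TU (submx_trans sumY _); rewrite addsmx_sub addsmxSr andbT.
  apply: submx_trans sumK _; rewrite addsmxS //.
  exact: submx_trans KK1 K1Y.
exists (T :&: Y)%MS; first split.
- exact: stable_capmx.
- by rewrite sub_capmx BT (submx_trans BK (submx_trans KK1 K1Y)).
- exact: submx_trans (capmxSl _ _) TU.
- apply: submx_trans UTS _; rewrite addsmx_sub addsmxSr andbT.
  have : (T <= (T :&: S + Y) :&: T)%MS by rewrite sub_capmx TTSY submx_refl.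
  rewrite -matrix_modl ?capmxSl // => /submx_trans; apply.
  by rewrite addsmx_sub (submx_trans (capmxSr _ _) (addsmxSr _ _)) capmxC addsmxSl.
rewrite ltn_mxrankE ?capmxSl //; apply: contraL ltK1S => TTY.
rewrite ltn_mxrankE // negbK; apply: submx_trans sumK _.
rewrite addsmx_sub KK1 andbT; apply: submx_trans capY; rewrite capmxC.
by rewrite capmxS // (submx_trans TTY (capmxSr _ _)).
Qed.

Lemma soc_nonsplit : exists K, [/\ simple_sq g K S, (B <= K)%MS & ~ splits K S U].
Proof.
apply: NNPP => no_nonsplit.
have all_split K : simple_sq g K S -> (B <= K)%MS -> splits K S U.
  by move=> simK BK; apply: NNPP => nsplit; apply: no_nonsplit; exists K.
have [[[_ sU SU] _ _] [[_ _ BS] _ _]] := (simSU, socBS).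
have PU : supplement U by split; rewrite ?addsmxSl ?(submx_trans BS SU).
have [T PT minT] := ex_minimal (fun T => \rank T) PU.
have [T' PT' ltT'T] := supplement_shrink PT all_split.
by have := minT T' PT'; rewrite leqNgt ltT'T.
Qed.

End Socle.

Definition induced_filt (Ff : nat -> 'M[F]_n) W U k := (Ff k :&: U + W)%MS.

Lemma rank_induced_filt_top Ff W U k :
  (W <= U)%MS -> (U <= Ff k)%MS -> \rank (induced_filt Ff W U k) = \rank U.
Proof.
move=> WU UF; apply/eqmx_rank/andP; split; first by rewrite addsmx_sub capmxSr.
by apply: submx_trans (addsmxSl _ _); rewrite sub_capmx UF submx_refl.
Qed.

Lemma rank_induced_filt_mid Ff W U k :
  (W <= Ff k)%MS -> (Ff k <= U)%MS -> \rank (induced_filt Ff W U k) = \rank (Ff k).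
Proof.
move=> WF FU; apply/eqmx_rank/andP; split; first by rewrite addsmx_sub capmxSl.
by apply: submx_trans (addsmxSl _ _); rewrite sub_capmx submx_refl.
Qed.

Lemma rank_induced_filt_bot Ff W U k :
  (Ff k <= W)%MS -> \rank (induced_filt Ff W U k) = \rank W.
Proof.
move=> FW; apply/eqmx_rank/andP; split; last exact: addsmxSr.
by rewrite addsmx_sub submx_refl (submx_trans (capmxSl _ _) FW).
Qed.

Lemma drad_pointed Rf d W U :
  (forall k, is_rad g (Rf k) (Rf k.+1)) -> drad g Rf W U d.+1 ->
  exists A, [/\ simple_sq g (Rf d.+1) A, (A <= Rf d)%MS & fpoints g Rf (Rf d.+1) A W U].
Proof.
move=> radRf [W0 [U0 [simWU R2W0 U0R1 isoWU]]].
have decRf : {homo Rf : i j / (i <= j)%N >-> (j <= i)%MS}.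
  apply: homo_leq => [A|A B C AB CA|k].
  - exact: submx_refl.
  - exact: submx_trans CA AB.
  - by case: (radRf k) => -[].
have [[_ sR1 _] ssR1 _] := radRf d.+1.
have [C [R2C simC isoC]] := semisimple_simple_quotient sR1 ssR1 simWU R2W0 U0R1.
have [A [simA ARd nsplit]] := rad_nonsplit (radRf d) simC.
have [[[_ _ CR1] ltCR1 _] [[_ _ R1A] ltR1A _]] := (simC, simA).
exists A; split=> //; exists C, (Rf d.+1), A; split=> //.
- by split; [case: simC | case: simA].
- exact: iso_sq_trans isoC isoWU.
- exact: iso_sq_refl.
exists d, d.+1; split; first exact: n_Sn.
apply: (jumps_three_levels (r := fun k => \rank (induced_filt Rf C A k))
          (a := \rank A) (b := \rank (Rf d.+1)) (c := \rank C)).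
- by rewrite neq_ltn ltR1A orbT.
- by rewrite neq_ltn ltCR1 orbT.
- move=> k le_kd; apply: rank_induced_filt_top; first exact: submx_trans CR1 R1A.
  exact: submx_trans ARd (decRf _ _ le_kd).
- exact: rank_induced_filt_mid.
- move=> k le_d2k; apply: rank_induced_filt_bot.
  exact: submx_trans (decRf _ _ le_d2k) R2C.
Qed.

Lemma dsoc_pointed Sf d W U :
  (forall k, is_soc_over g (Sf k) (Sf k.+1)) -> dsoc g Sf W U d.+1 ->
  exists B, [/\ simple_sq g B (Sf d.+1), (Sf d <= B)%MS & fpoints g Sf W U B (Sf d.+1)].
Proof.
move=> socSf [W0 [U0 [simWU S1W0 U0S2 isoWU]]].
have incSf : {homo Sf : i j / (i <= j)%N >-> (i <= j)%MS}.
  apply: homo_leq => [A|A B C AB BC|k].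
  - exact: submx_refl.
  - exact: submx_trans AB BC.
  - by case: (socSf k) => -[].
have [[sS1 _ _] ssS2 _] := socSf d.+1.
have [T [TU0 simT isoT]] := semisimple_simple_sub sS1 ssS2 simWU S1W0 U0S2.
have [B [simB S0B nsplit]] := soc_nonsplit (socSf d) simT.
have [[[_ _ BS1] ltBS1 _] [[_ _ S1T] ltS1T _]] := (simB, simT).
exists B; split=> //; exists B, (Sf d.+1), T; split=> //.
- by split; [case: simB | case: simT].
- exact: iso_sq_refl.
- exact: iso_sq_trans isoT isoWU.
exists d, d.+1; split; first exact: n_Sn.
apply: (jumps_three_levels (r := fun k => \rank (induced_filt Sf B T k))
          (a := \rank B) (b := \rank (Sf d.+1)) (c := \rank T)).
- by rewrite neq_ltn ltBS1.
- by rewrite neq_ltn ltS1T.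
- by move=> k le_kd; apply: rank_induced_filt_bot; apply: submx_trans (incSf _ _ le_kd) S0B.
- exact: rank_induced_filt_mid.
- move=> k le_d2k; apply: rank_induced_filt_top; first exact: submx_trans BS1 S1T.
  exact: submx_trans TU0 (submx_trans U0S2 (incSf _ _ le_d2k)).
Qed.

End Modules.

Theorem lemma4p3 (F : fieldType) (n : nat) (I : finType) (g : I -> 'M[F]_n)
    (Rf Sf : nat -> 'M[F]_n) (W U : 'M[F]_n) :
  multfree g -> radfilt g Rf -> socfilt g Sf -> simple_sq g W U ->
  (forall d, drad g Rf W U d.+1 ->
     exists W' U', [/\ simple_sq g W' U', drad g Rf W' U' d
                     & fpoints g Rf W' U' W U]) /\
  (forall d, dsoc g Sf W U d.+1 ->
     exists W' U', [/\ simple_sq g W' U', dsoc g Sf W' U' d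
                     & fpoints g Sf W U W' U']).
Proof.
move=> _ [_ radRf] [_ socSf] _; split=> d.
- case/(drad_pointed radRf) => A [simA ARd pts]; exists (Rf d.+1), A; split=> //.
  by exists (Rf d.+1), A; split=> //; apply: iso_sq_refl.
- case/(dsoc_pointed socSf) => B [simB S0B pts]; exists B, (Sf d.+1); split=> //.
  by exists B, (Sf d.+1); split=> //; apply: iso_sq_refl.
Qed.
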